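(* Let $m,k$ be positive integers and let $G$ be a graph whose rank cardinality vector is $(1,m,k,1)$. Then the subgraph of $G$ induced by the vertices of corner rank 3 is connected.
   Context: All graphs are finite, nonempty, and reflexive (every vertex has a loop). $N[v]$ is the closed neighborhood of $v$ (including $v$). For distinct $v,w$, $w$ strictly corners $v$ if $N[v]\subsetneq N[w]$; $v$ is then a strict corner. Corner ranking: set $G^{(1)}=G$, $k=1$. If $G^{(k)}$ is a clique, give all its vertices rank $k$ and stop. Else if $G^{(k)}$ has no strict corners, give all its vertices rank $\infty$ and stop. Else give every strict corner of $G^{(k)}$ rank $k$, delete them to get $G^{(k+1)}$ (induced subgraph), increase $k$ and repeat. The corner rank of $G$ is the largest rank of a vertex; $X_k$ is the set of rank-$k$ vertices. The rank cardinality vector of a graph of finite corner rank $\alpha$ is $(x_\alpha,\dots,x_1)$ with $x_k=|X_k|$ (so here $|X_4|=1$, $|X_3|=m$, $|X_2|=k$, $|X_1|=1$). *)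

From mathcomp Require Import all_boot.
Set Implicit Arguments. Unset Strict Implicit. Unset Printing Implicit Defensive.

Definition refl_graph (T : finType) (e : rel T) : Prop :=
  reflexive e /\ symmetric e.

Section CornerRank.
Variables (T : finType) (e : rel T).

(* closed neighbourhood of v in the subgraph induced by S *)
Definition nbhd (S : {set T}) (v : T) : {set T} := [set u in S | e v u].

Definition strict_corners (S : {set T}) : {set T} :=
  [set v in S | [exists w in S, (w != v) && (nbhd S v \proper nbhd S w)]].

Definition is_clique (S : {set T}) : bool :=
  [forall u in S, forall v in S, e u v].

Definition corner_step (S : {set T}) : {set T} := S :\: strict_corners S.

(* vertex set of G^(k) (k >= 1); G^(1) = G *)
Definition level (k : nat) : {set T} := iter k.-1 corner_step [set: T].

Definition continues_to (k : nat) : bool :=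
  [forall j : 'I_k, (1 <= j) ==>
     (~~ is_clique (level j) && (strict_corners (level j) != set0))].

Definition has_rank (v : T) (k : nat) : bool :=
  [&& 1 <= k, continues_to k &
      if is_clique (level k) then v \in level k
      else v \in strict_corners (level k)].

Definition rank_set (k : nat) : {set T} := [set v | has_rank v k].

Definition induced_connected (S : {set T}) : bool :=
  [forall u in S, forall v in S,
     connect [rel x y | [&& x \in S, y \in S & e x y]] u v].

End CornerRank.

From mathcomp Require Import all_boot.
Set Implicit Arguments. Unset Strict Implicit. Unset Printing Implicit Defensive.

(* Only |X_1| = |X_4| = 1 matters. Let V2 and V3 be the vertex sets left after
   one and two rounds of corner deletion, X_1 = {x} and X_4 = {z}, so that
   V3 = X_3 + z. Every vertex is dominated by a non-corner (a dominating vertex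
   with largest neighbourhood), so z dominates every s in X_3 within V3 and is
   adjacent to all of X_3. For non-adjacent a, b in X_3, a is not a corner of
   V2, so z does not dominate it there: a has a neighbour u in V2 outside N[z].
   As u is a corner of V2, some h in X_3 dominates it in V2; h is adjacent to a
   and to every V3-neighbour of u, so these all lie in the component of a in
   G[X_3]. Moreover u is adjacent to x, since u is not a corner of G. Take v
   likewise for b. The vertex w cornering x in G lies in V2 and is adjacent to
   u and v, hence so is a vertex of V3 dominating w in V2; it joins the
   components of a and b. *)

Section Corners.
Variables (T : finType) (e : rel T).
Implicit Types (X : {set T}) (u h : T).

Definition induced_adj X : rel T := [rel a b | [&& a \in X, b \in X & e a b]].

Lemma induced_adj_sym X : symmetric e -> symmetric (induced_adj X).
Proof. by move=> e_sym a b; rewrite /induced_adj /= e_sym andbCA. Qed.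

Lemma in_nbhd X u t : (t \in nbhd e X u) = (t \in X) && e u t.
Proof. by rewrite inE. Qed.

Lemma in_strict_corners X u : (u \in strict_corners e X) =
  (u \in X) && [exists h in X, (h != u) && (nbhd e X u \proper nbhd e X h)].
Proof. by rewrite inE. Qed.

Lemma in_corner_step X u :
  (u \in corner_step e X) = (u \in X) && (u \notin strict_corners e X).
Proof. by rewrite inE andbC. Qed.

Lemma corner_step_sub X : corner_step e X \subset X.
Proof. exact: subsetDl. Qed.

Lemma nbhd_subsetP X u h :
  reflect {in X, forall t, e u t -> e h t} (nbhd e X u \subset nbhd e X h).
Proof.
apply: (iffP subsetP) => [sub t tX ut | adj t].
  by have := sub t; rewrite !in_nbhd tX ut => /(_ isT).
by rewrite !in_nbhd => /andP[tX /(adj t tX) ->]; rewrite tX.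
Qed.

Lemma dominated_by_noncorner X u : u \in X ->
  exists2 h, h \in corner_step e X & {in X, forall t, e u t -> e h t}.
Proof.
move=> uX; pose P h := (h \in X) && (nbhd e X u \subset nbhd e X h).
have Pu : P u by rewrite /P uX subxx.
case: (arg_maxnP (fun h => #|nbhd e X h|) Pu) => h /andP[hX /nbhd_subsetP uh] hmax.
exists h => //; rewrite in_corner_step hX in_strict_corners hX /=.
apply/exists_inP => -[w wX /andP[_ hw]].
have := hmax w; rewrite /P wX (subset_trans _ (proper_sub hw)); last exact/nbhd_subsetP.
by move=> /(_ isT) /=; rewrite leqNgt proper_card.
Qed.

Lemma noncorner_private_neighbour X u h d :
  u \in X -> u \notin strict_corners e X -> h \in X -> d \in X -> e h d -> ~~ e u d ->
  exists2 y, y \in X & e u y && ~~ e h y.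
Proof.
move=> uX uNc hX dX hd ud.
have [uh|/subsetPn[y]] := boolP (nbhd e X u \subset nbhd e X h); last first.
  by rewrite !in_nbhd => /andP[yX uy]; rewrite yX /= => hy; exists y; rewrite ?uy.
case/negP: uNc; rewrite in_strict_corners uX; apply/exists_inP; exists h => //.
have -> /= : h != u by apply: contraNneq ud => <-.
by apply/properP; split=> //; exists d; rewrite !in_nbhd dX ?hd ?ud.
Qed.

End Corners.

Section CornerRanking.
Variables (T : finType) (e : rel T).

Lemma levelS n : level e n.+2 = corner_step e (level e n.+1).
Proof. by []. Qed.

Lemma level_subset i j : i <= j -> level e j \subset level e i.
Proof.
move/subnK <-; elim: (j - i) => [|d IH]; first exact: subxx.
apply: subset_trans IH; rewrite addSn; case: (d + i) => [|n]; first exact: subxx.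
by rewrite levelS corner_step_sub.
Qed.

Lemma strict_corner_notin_level j n v : 0 < j < n ->
  v \in strict_corners e (level e j) -> v \notin level e n.
Proof.
case: j => // j /= jn vc; apply: contraL vc => /(subsetP (level_subset jn)).
by rewrite levelS in_corner_step => /andP[].
Qed.

Lemma continues_to_le i j : i <= j -> continues_to e j -> continues_to e i.
Proof. by move=> ij /forallP cj; apply/forallP => k; apply: (cj (widen_ord ij k)). Qed.

Lemma continues_to_not_clique n j :
  continues_to e n -> 0 < j < n -> ~~ is_clique e (level e j).
Proof.
by move=> /forallP cn /andP[j0 jn]; have /= := cn (Ordinal jn); rewrite j0 => /andP[].
Qed.

Lemma has_rank_lt n j v : continues_to e n -> 0 < j < n ->
  has_rank e v j = (v \in strict_corners e (level e j)).
Proof.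
move=> cn hj; have /andP[j0 jn] := hj.
rewrite /has_rank j0 (continues_to_le (ltnW jn) cn).
by rewrite (negbTE (continues_to_not_clique cn hj)).
Qed.

Lemma rank_set_lt n j : continues_to e n -> 0 < j < n ->
  rank_set e j = strict_corners e (level e j).
Proof. by move=> cn hj; apply/setP => v; rewrite inE (has_rank_lt _ cn hj). Qed.

Lemma has_rank_level v n : has_rank e v n -> v \in level e n.
Proof. by case/and3P => _ _; case: ifP => // _; rewrite in_strict_corners => /andP[]. Qed.

Lemma last_level_rank_set n :
  (forall v, exists j, 1 <= j <= n /\ has_rank e v j) ->
  continues_to e n -> level e n = rank_set e n.
Proof.
move=> ranked cn; apply/setP => v; rewrite inE.
apply/idP/idP => [vn | /has_rank_level //].
have [j [/andP[j0 jn] vj]] := ranked v.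
case: ltngtP jn vj => // [jn _ | -> //].
rewrite (has_rank_lt _ cn) ?j0 // => vc.
by rewrite (negbTE (strict_corner_notin_level _ vc)) ?j0 in vn.
Qed.

End CornerRanking.

Section SingletonEnds.
Variables (T : finType) (e : rel T).
Hypotheses (e_refl : reflexive e) (e_sym : symmetric e).
Variables (x z : T).
Local Notation V2 := (corner_step e [set: T]).
Local Notation V3 := (corner_step e V2).
Local Notation S := (strict_corners e V3).
Hypothesis first_corners : strict_corners e [set: T] = [set x].
Hypothesis third_core : corner_step e V3 = [set z].

Lemma V3_sub_V2 t : t \in V3 -> t \in V2.
Proof. exact: (subsetP (corner_step_sub _ _)). Qed.

Lemma in_V3 t : (t \in V3) = (t == z) || (t \in S).
Proof.
have [tS | tNS] := boolP (t \in S).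
  by rewrite orbT; move: tS; rewrite in_strict_corners => /andP[].
by rewrite orbF -in_set1 -third_core [RHS]in_corner_step tNS andbT.
Qed.

Lemma z_in_V3 : z \in V3.
Proof. by rewrite in_V3 eqxx. Qed.

Lemma in_S_V3 s : s \in S -> s \in V3.
Proof. by rewrite in_V3 => ->; rewrite orbT. Qed.

Lemma z_adj_S s : s \in S -> e z s.
Proof.
move=> sS; have [h] := dominated_by_noncorner e (in_S_V3 sS).
by rewrite third_core => /set1P -> zs; apply: zs (e_refl s); apply: in_S_V3.
Qed.

Lemma corner_of_V2_adj_x u : u \in strict_corners e V2 -> e u x.
Proof.
rewrite in_strict_corners => /andP[uV2 /exists_inP[w wV2]].
case/andP=> _ /properP[/nbhd_subsetP uw [d]]; rewrite !in_nbhd => /andP[dV2 wd].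
rewrite dV2 /= => ud; have uNc : u \notin strict_corners e [set: T].
  by move: uV2; rewrite in_corner_step => /andP[].
have [y _ /andP[uy wy]] :=
  noncorner_private_neighbour (in_setT u) uNc (in_setT w) (in_setT d) wd ud.
have : y \in strict_corners e [set: T].
  by apply: contraR wy => yNc; apply: uw; rewrite // in_corner_step in_setT.
by rewrite first_corners => /set1P <-.
Qed.

Lemma gate_vertex c d : c \in S -> d \in S -> ~~ e c d ->
  exists u, [/\ u \in V2, e u x & {in V3, forall t, e u t -> connect (induced_adj e S) c t}].
Proof.
move=> cS dS cd; have cV3 := in_S_V3 cS; have cV2 := V3_sub_V2 cV3.
have cNc : c \notin strict_corners e V2 by move: cV3; rewrite in_corner_step => /andP[].
have [y yV2 /andP[cy zy]] := noncorner_private_neighbour cV2 cNc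
  (V3_sub_V2 z_in_V3) (V3_sub_V2 (in_S_V3 dS)) (z_adj_S dS) cd.
have z_nadj t : e y t -> t != z by apply: contraTneq => ->; rewrite e_sym.
have yNV3 : y \notin V3.
  by rewrite in_V3 negb_or (z_nadj _ (e_refl y)); apply: contra zy; apply: z_adj_S.
have [h hV3 yh] := dominated_by_noncorner e yV2.
have hS : h \in S by move: hV3; rewrite in_V3 (negbTE (z_nadj _ _)) // e_sym yh.
exists y; split=> //.
  by apply: corner_of_V2_adj_x; move: yNV3; rewrite in_corner_step yV2 negbK.
move=> t tV3 yt; have tS : t \in S by move: tV3; rewrite in_V3 (negbTE (z_nadj _ yt)).
apply: (connect_trans (y := h)); apply: connect1; rewrite /induced_adj /= ?cS ?hS ?tS /=.
  by rewrite e_sym yh // e_sym.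
by rewrite yh // V3_sub_V2.
Qed.

Lemma third_corners_connected : induced_connected e S.
Proof.
apply/forall_inP => a aS; apply/forall_inP => b bS.
change (connect (induced_adj e S) a b).
have [ab|nab] := boolP (e a b); first by apply: connect1; rewrite /induced_adj /= aS bS.
have [u [uV2 ux a_u]] := gate_vertex aS bS nab.
have nba : ~~ e b a by rewrite e_sym.
have [v [vV2 vx b_v]] := gate_vertex bS aS nba.
have : x \in strict_corners e [set: T] by rewrite first_corners set11.
rewrite in_strict_corners => /andP[_ /exists_inP[w _ /andP[wx]]].
move=> /proper_sub/nbhd_subsetP xw.
have wV2 : w \in V2 by rewrite in_corner_step in_setT first_corners in_set1 wx.
have [h hV3 wh] := dominated_by_noncorner e wV2.
have adj_h t : t \in V2 -> e t x -> e t h.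
  by move=> tV2 tx; rewrite e_sym wh // xw // e_sym.
apply: connect_trans (a_u h hV3 (adj_h u uV2 ux)) _.
by rewrite (sym_connect_sym (induced_adj_sym S e_sym)) b_v ?adj_h.
Qed.

End SingletonEnds.

Theorem theorem3p24 (T : finType) (e : rel T) (m k : nat) :
  refl_graph e -> 0 < m -> 0 < k ->
  (* every vertex has finite rank, and the corner rank is 4 *)
  (forall v : T, exists j, 1 <= j <= 4 /\ has_rank e v j) ->
  #|rank_set e 4| = 1 -> #|rank_set e 3| = m ->
  #|rank_set e 2| = k -> #|rank_set e 1| = 1 ->
  induced_connected e (rank_set e 3).
Proof.
move=> [e_refl e_sym] _ _ ranked X4 _ _ X1.
have [z X4z] : exists z, rank_set e 4 = [set z] by apply/cards1P; rewrite X4.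
have [x X1x] : exists x, rank_set e 1 = [set x] by apply/cards1P; rewrite X1.
have cont4 : continues_to e 4 by move: (set11 z); rewrite -X4z inE => /and3P[].
rewrite (rank_set_lt cont4 (isT : 0 < 3 < 4)).
apply: (third_corners_connected e_refl e_sym (x := x) (z := z)).
  by rewrite -X1x (rank_set_lt cont4 (isT : 0 < 1 < 4)).
by rewrite -X4z -(last_level_rank_set ranked cont4).
Qed.
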